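(* Let $\mathcal{X}=\{1,\dots,n\}$, let $\pi$ be a strictly positive probability distribution on $\mathcal{X}$ ordered so that $\pi(1)\le\pi(2)\le\dots\le\pi(n)$, let $P$ be a transition matrix with $\pi P=\pi$, let $2\le k\le n$, and let $\alpha\in[0,1)$. For a partition $(\mathcal{O}_i)_{i=1}^k$ of $\mathcal{X}$ into $k$ nonempty proper subsets, let $G$ be its Gibbs kernel, $\overline{\pi}=(\pi(\mathcal{O}_1),\dots,\pi(\mathcal{O}_k))$, and $Q_\alpha$, $\widetilde{\pi}_\alpha$, $\widetilde{\Pi}_\alpha$ as defined below. Then, as functions of the partition, $$\operatorname*{argmin}\mathrm{KL}_{\widetilde{\pi}_\alpha}(Q_\alpha\|\widetilde{\Pi}_\alpha)=\operatorname*{argmin}\mathrm{KL}_\pi(G\|\Pi)=\operatorname*{argmin}H(\overline{\pi}),$$ and the minimum is attained by the partition $\mathcal{O}_i=\{i\}$ for $1\le i\le k-1$ and $\mathcal{O}_k=\{k,k+1,\dots,n\}$.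
   Context: Gibbs kernel: $G(x,y)=\pi(y)/\pi(\mathcal{O}(x))$ if $y\in\mathcal{O}(x)$ and $0$ otherwise, $\mathcal{O}(x)$ the block containing $x$, $\pi(\mathcal{O})=\sum_{z\in\mathcal{O}}\pi(z)$. $\Pi$ is the matrix with every row equal to $\pi$. With $R(+1)=1-\alpha$, $R(-1)=\alpha$: $Q_\alpha$ is the transition matrix on $\mathcal{X}\times\{-1,+1\}$ with $Q_\alpha((x,i),(y,+1))=(1-\alpha)G(x,y)$, $Q_\alpha((x,i),(y,-1))=\alpha P(x,y)$; $\widetilde{\pi}_\alpha(x,i)=\pi(x)R(i)$; $\widetilde{\Pi}_\alpha$ has every row equal to $\widetilde{\pi}_\alpha$. $\mathrm{KL}_\mu(P\|Q)=\sum_{x,y}\mu(x)P(x,y)\log\frac{P(x,y)}{Q(x,y)}$ with $0\log(0/a)=0$; $H(\mu)=-\sum_i\mu(i)\log\mu(i)$. *)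

From HB Require Import structures.
From mathcomp Require Import all_boot all_order all_algebra.
From mathcomp Require Import reals exp.
Set Implicit Arguments. Unset Strict Implicit. Unset Printing Implicit Defensive.
Import Order.TTheory GRing.Theory Num.Theory.
Local Open Scope ring_scope.

Section Defs.
Variable R : realType.

Definition KLdiv (T : finType) (mu : T -> R) (P Q : T -> T -> R) : R :=
  \sum_(x : T) \sum_(y : T)
     (if P x y == 0 then 0 else mu x * P x y * ln (P x y / Q x y)).

Definition massOf (n : nat) (pi : 'I_n -> R) (O : {set 'I_n}) : R :=
  \sum_(z in O) pi z.

Definition gibbs (n : nat) (pi : 'I_n -> R) (B : {set {set 'I_n}})
  (x y : 'I_n) : R :=
  if y \in pblock B x then pi y / massOf pi (pblock B x) else 0.

Definition PiMat (n : nat) (pi : 'I_n -> R) (x y : 'I_n) : R := pi y.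

(* R(+1) = 1 - alpha, R(-1) = alpha ; the sign +1 is encoded as [true] *)
Definition Rw (alpha : R) (i : bool) : R := if i then 1 - alpha else alpha.

(* Q_alpha on X x {-1,+1} (+1 = true, -1 = false) *)
Definition Qalpha (n : nat) (pi : 'I_n -> R) (P : 'M[R]_n) (alpha : R)
  (B : {set {set 'I_n}}) (u v : 'I_n * bool) : R :=
  if v.2 then (1 - alpha) * gibbs pi B u.1 v.1 else alpha * P u.1 v.1.

Definition pitilde (n : nat) (pi : 'I_n -> R) (alpha : R) (u : 'I_n * bool) : R :=
  pi u.1 * Rw alpha u.2.

Definition Pitilde (n : nat) (pi : 'I_n -> R) (alpha : R) (u v : 'I_n * bool) : R :=
  pitilde pi alpha v.

Definition blockEntropy (n : nat) (pi : 'I_n -> R) (B : {set {set 'I_n}}) : R :=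
  - \sum_(O in B) massOf pi O * ln (massOf pi O).

Definition argmin (T : finType) (S : {set T}) (f : T -> R) : {set T} :=
  [set x in S | [forall y in S, f x <= f y]].

End Defs.

Definition kPartitions (n k : nat) : {set {set {set 'I_n}}} :=
  [set B | partition B [set: 'I_n] & #|B| == k].

(* the partition {1},...,{k-1},{k,...,n}, written 0-indexed:
   {0},...,{k-2},{k-1,...,n-1} *)
Definition extremalPartition (n k : nat) : {set {set 'I_n}} :=
  [set [set x] | x : 'I_n & (x < k.-1)%N] :|: [set [set x : 'I_n | (k.-1 <= x)%N]].

From HB Require Import structures.
From mathcomp Require Import all_boot all_order all_algebra.
From mathcomp Require Import reals exp.
From mathcomp Require Import ring lra.
Set Implicit Arguments. Unset Strict Implicit. Unset Printing Implicit Defensive.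
Import Order.TTheory GRing.Theory Num.Theory.
Local Open Scope ring_scope.

(* Each row of Q_alpha, and of the reference kernel, is a (1 - alpha, alpha)
   mixture, so KL(Q_alpha || Pi_alpha) = (1 - alpha) KL(G || Pi) + alpha KL(P || Pi),
   and KL(G || Pi) is exactly the entropy of the block masses: the three argmins
   coincide.  For the entropy bound, let M be a heaviest block.  The other k - 1
   blocks can be listed so that the j-th one contains a point >= j, hence has mass
   >= pi(j) since pi is sorted.  Lowering each of them to pi(j) and moving the
   excess onto M can only increase sum_O m_O ln m_O, by convexity of t ln t, and
   produces exactly the block masses of the extremal partition. *)

Section XlnX.
Variable R : realType.

Definition xlnx (t : R) := t * ln t.

Lemma ln_le_subr1 (z : R) : 0 < z -> ln z <= z - 1.
Proof.
by move=> z_gt0; have := @le_ln1Dx R (z - 1); rewrite subrKC; apply; lra.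
Qed.

Lemma xlnx_tangent (x y : R) : 0 < x -> 0 < y ->
  xlnx x + (ln x + 1) * (y - x) <= xlnx y.
Proof.
move=> x_gt0 y_gt0; rewrite /xlnx.
have := ln_le_subr1 (divr_gt0 x_gt0 y_gt0).
rewrite ln_div ?posrE // => /(ler_wpM2l (ltW y_gt0)).
rewrite mulrBr [y * (_ - 1)]mulrBr mulrCA divff ?gt_eqF // !mulr1.
lra.
Qed.

Lemma xlnx_transfer (I : finType) (P : pred I) (x y : I -> R) (a : R) :
  0 < a -> (forall i, P i -> [/\ 0 < y i, y i <= x i & x i <= a]) ->
  xlnx a + \sum_(i | P i) xlnx (x i)
    <= xlnx (a + \sum_(i | P i) (x i - y i)) + \sum_(i | P i) xlnx (y i).
Proof.
move=> a_gt0 xy; set d := \sum_(i | P i) (x i - y i).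
have d_ge0 : 0 <= d by apply: sumr_ge0 => i /xy[_ yx _]; rewrite subr_ge0.
have := xlnx_tangent a_gt0 (ltr_wpDr d_ge0 a_gt0); rewrite [a + d - a]addrC addKr.
have term i : P i -> xlnx (x i) <= xlnx (y i) + (ln a + 1) * (x i - y i).
  case/xy=> y_gt0 yx xa; have x_gt0 := lt_le_trans y_gt0 yx.
  have := xlnx_tangent x_gt0 y_gt0.
  have : (ln (x i) + 1) * (x i - y i) <= (ln a + 1) * (x i - y i).
    by rewrite ler_wpM2r ?subr_ge0 // lerD2r ler_ln ?posrE.
  lra.
have : \sum_(i | P i) xlnx (x i)
    <= \sum_(i | P i) (xlnx (y i) + (ln a + 1) * (x i - y i)).
  exact: ler_sum.
rewrite big_split /= -mulr_sumr -/d.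
lra.
Qed.

End XlnX.

Section BlockMasses.
Variables (R : realType) (n : nat) (p : 'I_n -> R).
Hypothesis p_gt0 : forall x, 0 < p x.

Lemma massOf_ge (O : {set 'I_n}) x : x \in O -> p x <= massOf p O.
Proof.
move=> xO; rewrite /massOf (bigD1 x) //= lerDl.
by apply: sumr_ge0 => y _; apply: ltW.
Qed.

Lemma massOf_gt0 (O : {set 'I_n}) x : x \in O -> 0 < massOf p O.
Proof. by move=> xO; exact: lt_le_trans (p_gt0 x) (massOf_ge xO). Qed.

Lemma sum_massOf_partition (B : {set {set 'I_n}}) :
  partition B [set: 'I_n] -> \sum_(O in B) massOf p O = \sum_x p x.
Proof.
case/and3P=> /eqP cov triv _; rewrite -big_trivIset // cov.
by apply: eq_bigl => x; rewrite inE.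
Qed.

Lemma KLdiv_gibbs (B : {set {set 'I_n}}) :
  partition B [set: 'I_n] -> KLdiv p (gibbs p B) (PiMat p) = blockEntropy p B.
Proof.
move=> partB; case/and3P: (partB) => /eqP cov triv _.
have row O x : O \in B -> x \in O ->
    \sum_y (if gibbs p B x y == 0 then 0
            else p x * gibbs p B x y * ln (gibbs p B x y / PiMat p x y))
    = - (p x * ln (massOf p O)).
  move=> OB xO; have m_gt0 := massOf_gt0 xO.
  rewrite /gibbs (def_pblock triv OB xO) (bigID (mem O)) /= addrC big1; last first.
    by move=> y /negbTE ->; rewrite eqxx.
  rewrite add0r (eq_bigr (fun y => p x * (p y / massOf p O) * - ln (massOf p O))).
    rewrite -mulr_suml -mulr_sumr -mulr_suml -/(massOf p O) divff ?gt_eqF // mulr1.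
    by rewrite mulrN.
  move=> y ->; rewrite mulf_eq0 invr_eq0 !gt_eqF //=.
  by rewrite /PiMat [p y / _ / _]mulrAC divff ?gt_eqF // mul1r lnV ?posrE.
rewrite /KLdiv /blockEntropy -sumrN.
transitivity (\sum_(x in cover B) \sum_y (if gibbs p B x y == 0 then 0
    else p x * gibbs p B x y * ln (gibbs p B x y / PiMat p x y))).
  by rewrite cov; apply: eq_bigl => x; rewrite inE.
rewrite big_trivIset //; apply: eq_bigr => O OB.
by rewrite (eq_bigr _ (row O ^~ OB)) sumrN -mulr_suml.
Qed.

End BlockMasses.

Lemma sum_prod_bool (T : finType) (R : nmodType) (F : T * bool -> R) :
  \sum_u F u = \sum_x (F (x, true) + F (x, false)).
Proof.
rewrite (eq_bigr (fun u => F (u.1, u.2))); last by case.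
rewrite -(pair_bigA _ (fun x b => F (x, b))).
by apply: eq_bigr => x _; rewrite big_bool.
Qed.

Lemma KLterm_scale (R : realType) (c w a mu r : R) :
  (if c * a == 0 then 0 else mu * w * (c * a) * ln (c * a / (r * c)))
  = w * (c * (if a == 0 then 0 else mu * a * ln (a / r))).
Proof.
have [->|c_neq0] := eqVneq c 0; first by rewrite !mul0r eqxx mulr0.
rewrite mulf_eq0 (negbTE c_neq0) /=; case: (a == 0); first by rewrite !mulr0.
rewrite [r * c]mulrC invfM [c * a * _]mulrACA mulfV // mul1r.
ring.
Qed.

Lemma KLdiv_Qalpha (R : realType) n (p : 'I_n -> R) (P : 'M[R]_n) alpha B :
  KLdiv (pitilde p alpha) (Qalpha p P alpha B) (Pitilde p alpha)
  = (1 - alpha) * KLdiv p (gibbs p B) (PiMat p) + alpha * KLdiv p P (PiMat p).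
Proof.
rewrite /KLdiv sum_prod_bool !mulr_sumr -big_split; apply: eq_bigr => x _.
rewrite !sum_prod_bool -big_split !mulr_sumr -big_split; apply: eq_bigr => y _.
rewrite /Qalpha /pitilde /Pitilde /PiMat /Rw /= !KLterm_scale /=.
ring.
Qed.

Lemma ltn_sorted_nth_ge (t : seq nat) m : sorted ltn t -> all (leq m) t ->
  forall j, (j < size t)%N -> (m + j <= nth 0 t j)%N.
Proof.
elim: t m => [|a t IH] m //= t_sorted /andP[ma _] [|j] j_lt /=; first by rewrite addn0.
rewrite addnS -addSn; apply: IH => //; first exact: path_sorted t_sorted.
apply/allP => b bt; apply: leq_ltn_trans ma _.
by move/allP: (order_path_min ltn_trans t_sorted); apply.
Qed.

Lemma trivIset_enum_ge n (B : {set {set 'I_n}}) : trivIset B -> set0 \notin B ->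
  exists2 s, perm_eq s (enum B) &
    forall j, (j < #|B|)%N -> exists2 x : 'I_n, x \in nth set0 s j & (j <= x)%N.
Proof.
move=> triv nz.
pose key (O : {set 'I_n}) : nat := if [pick x in O] is Some x then x else 0.
have keyP O : O \in B -> exists2 x : 'I_n, x \in O & key O = x.
  move=> OB; rewrite /key; case: pickP => [x xO | noneO]; first by exists x.
  have : O != set0 by apply: contraNneq nz => <-.
  by case/set0Pn => x; rewrite noneO.
have key_inj : {in B &, injective key}.
  move=> O1 O2 O1B O2B key12.
  have [x1 x1O1 k1] := keyP O1 O1B; have [x2 x2O2 k2] := keyP O2 O2B.
  have x12 : x1 = x2 by apply: val_inj; rewrite /= -k1 -k2.
  by rewrite -(def_pblock triv O1B x1O1) -(def_pblock triv O2B x2O2) x12.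
pose s := sort (fun O1 O2 => (key O1 <= key O2)%N) (enum B).
have s_B O : O \in s -> O \in B by rewrite mem_sort mem_enum.
have s_sorted : sorted ltn (map key s).
  rewrite ltn_sorted_uniq_leq map_inj_in_uniq ?sort_uniq ?enum_uniq /=.
    by rewrite sorted_map; apply: sort_sorted => O1 O2; apply: leq_total.
  by move=> O1 O2 /s_B O1B /s_B O2B; apply: key_inj.
exists s => [|j j_lt]; first by rewrite perm_sort perm_refl.
have s_size : size s = #|B| by rewrite size_sort cardE.
have sjB : nth set0 s j \in B by apply/s_B/mem_nth; rewrite s_size.
have [x xO kx] := keyP _ sjB; exists x; rewrite // -kx.
have := @ltn_sorted_nth_ge _ 0 s_sorted (introT allP (fun _ _ => leq0n _)) j.
by rewrite size_map s_size add0n (nth_map set0) ?s_size //; apply.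
Qed.

Section ExtremalPartition.
Variables n k : nat.
Hypotheses (k_ge2 : (2 <= k)%N) (k_le_n : (k <= n)%N).

Local Notation heads := [set [set x] | x : 'I_n & (x < k.-1)%N].
Local Notation tail := [set x : 'I_n | (k.-1 <= x)%N].

Let km1_lt_n : (k.-1 < n)%N. Proof. by case: k k_ge2 k_le_n. Qed.

Lemma tail_notin_heads : tail \notin heads.
Proof.
apply/imsetP => -[x]; rewrite inE => x_lt /setP /(_ x).
by rewrite !inE eqxx leqNgt x_lt.
Qed.

Lemma extremalPartition_partition : partition (extremalPartition n k) [set: 'I_n].
Proof.
apply/and3P; split.
- apply/eqP/setP => x; rewrite inE; apply/bigcupP.
  case: (ltnP x k.-1) => x_k.
    exists [set x]; last exact: set11.
    by rewrite inE; apply/orP; left; apply/imsetP; exists x; rewrite ?inE.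
  by exists tail; rewrite !inE ?x_k ?eqxx ?orbT.
- apply/trivIsetP => O1 O2; rewrite !inE.
  case/orP=> [/imsetP[x1 x1_lt ->] | /eqP->];
    case/orP=> [/imsetP[x2 x2_lt ->] | /eqP->].
  + by move=> neq; rewrite disjoints1 in_set1 eq_sym; apply: contra neq => /eqP->.
  + by rewrite disjoints1 inE -ltnNge; rewrite inE in x1_lt.
  + by rewrite disjoint_sym disjoints1 inE -ltnNge; rewrite inE in x2_lt.
  + by rewrite eqxx.
- rewrite !inE negb_or; apply/andP; split.
    by apply/imsetP => -[x _] /setP /(_ x); rewrite !inE eqxx.
  by apply/eqP => /setP /(_ (Ordinal km1_lt_n)); rewrite !inE /= leqnn.
Qed.

Lemma card_extremalPartition : #|extremalPartition n k| = k.
Proof.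
rewrite /extremalPartition setUC cardsU1 tail_notin_heads card_imset; last first.
  exact: set1_inj.
have -> : #|[set x : 'I_n | (x < k.-1)%N]| = k.-1.
  rewrite -sum1_card (eq_bigl (fun x : 'I_n => (x < k.-1)%N)); last first.
    by move=> x; rewrite inE.
  by rewrite -(big_ord_widen n (fun=> 1%N) (ltnW km1_lt_n)) sum1_card card_ord.
by rewrite add1n; case: (k) k_ge2.
Qed.

Lemma extremalPartition_kPartition : extremalPartition n k \in kPartitions n k.
Proof.
by rewrite inE extremalPartition_partition card_extremalPartition eqxx.
Qed.

Variables (R : realType) (p : 'I_n -> R).
Hypotheses (p_gt0 : forall x, 0 < p x) (p_sum1 : \sum_x p x = 1)
  (p_sorted : forall x y : 'I_n, (x <= y)%N -> p x <= p y).

Lemma blockEntropy_extremalPartition :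
  blockEntropy p (extremalPartition n k)
  = - (\sum_(x : 'I_n | (x < k.-1)%N) xlnx (p x)
       + xlnx (1 - \sum_(x : 'I_n | (x < k.-1)%N) p x)).
Proof.
rewrite /blockEntropy /extremalPartition setUC big_setU1 ?tail_notin_heads //=.
rewrite big_imset /=; last by move=> x y _ _; apply: set1_inj.
rewrite addrC (eq_big (fun x : 'I_n => (x < k.-1)%N) (fun x => xlnx (p x))) //.
- congr (- (_ + xlnx _)).
  rewrite -p_sum1 (bigID (fun x : 'I_n => (x < k.-1)%N)) /= addrC addrK.
  by apply: eq_bigl => x; rewrite inE leqNgt.
- by move=> x; rewrite inE.
- by move=> x _; rewrite /massOf big_set1.
Qed.

Lemma blockEntropy_extremalPartition_le (B : {set {set 'I_n}}) :
  partition B [set: 'I_n] -> #|B| = k ->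
  blockEntropy p (extremalPartition n k) <= blockEntropy p B.
Proof.
move=> partB cardB; case/and3P: (partB) => _ triv nz.
rewrite blockEntropy_extremalPartition /blockEntropy lerN2.
have [O0 O0B] : exists O0, O0 \in B.
  by apply/set0Pn; rewrite -card_gt0 cardB; case: (k) k_ge2.
have [M MB M_max] := arg_maxP (massOf p) O0B; have {}MB : M \in B := MB.
have [s s_perm s_ge] := trivIset_enum_ge (trivIsetS (subD1set B M) triv)
  (contra (subsetP (subD1set B M) set0) nz).
have cardBM : #|B :\ M| = k.-1 by rewrite (cardsD1 M B) MB in cardB; rewrite -cardB.
have sumB (G : {set 'I_n} -> R) :
    \sum_(O in B) G O = G M + \sum_(x : 'I_n | (x < k.-1)%N) G (nth set0 s x).
  rewrite (bigD1 M MB) /= (eq_bigl (fun O => O \in B :\ M)); last first.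
    by move=> O; rewrite in_setD1 andbC.
  rewrite -big_enum -(perm_big _ s_perm) (big_nth set0) (perm_size s_perm).
  rewrite -cardE cardBM big_mkord.
  by rewrite (big_ord_widen n (fun j => G (nth set0 s j)) (ltnW km1_lt_n)).
have sB x : (x < k.-1)%N -> nth set0 s x \in B :\ M.
  move=> x_lt; rewrite -mem_enum -(perm_mem s_perm) mem_nth //.
  by rewrite (perm_size s_perm) -cardE cardBM.
have M_gt0 : 0 < massOf p M.
  have : M != set0 by apply: contraNneq nz => <-.
  by case/set0Pn => x /massOf_gt0; apply.
have cond (x : 'I_n) : (x < k.-1)%N ->
    [/\ 0 < p x, p x <= massOf p (nth set0 s x)
        & massOf p (nth set0 s x) <= massOf p M].
  move=> x_lt; have /setD1P[_ sxB] := sB x x_lt.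
  split; [exact: p_gt0 | | exact: M_max].
  have [|z z_sx x_le_z] := s_ge x; first by rewrite cardBM.
  exact: le_trans (p_sorted x_le_z) (massOf_ge p_gt0 z_sx).
have := xlnx_transfer M_gt0 cond.
rewrite sumrB addrA -sumB sum_massOf_partition // p_sum1.
rewrite (sumB (fun O => xlnx (massOf p O))).
lra.
Qed.

End ExtremalPartition.

Lemma eq_argmin_le (R : realType) (T : finType) (S : {set T}) (f g : T -> R) :
  {in S &, forall x y, (f x <= f y) = (g x <= g y)} -> argmin S f = argmin S g.
Proof.
move=> fg; apply/setP => x; rewrite !inE; case xS: (x \in S) => //=.
by apply: eq_forallb_in => y yS; apply: fg.
Qed.

Theorem proposition5p3 (R : realType) (n k : nat) (pi : 'rV[R]_n) (P : 'M[R]_n)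
  (alpha : R)
  (pi_pos : forall x : 'I_n, 0 < pi ord0 x)
  (pi_sum : \sum_(x : 'I_n) pi ord0 x = 1)
  (pi_sorted : forall x y : 'I_n, (x <= y)%N -> pi ord0 x <= pi ord0 y)
  (P_nonneg : forall x y : 'I_n, 0 <= P x y)
  (P_stoch : forall x : 'I_n, \sum_(y : 'I_n) P x y = 1)
  (P_stat : pi *m P = pi)
  (hk2 : (2 <= k)%N) (hkn : (k <= n)%N)
  (ha0 : 0 <= alpha) (ha1 : alpha < 1) :
  let p := fun x : 'I_n => pi ord0 x in
  let Parts := kPartitions n k in
  argmin Parts (fun B => KLdiv (pitilde p alpha) (Qalpha p P alpha B) (Pitilde p alpha))
    = argmin Parts (fun B => KLdiv p (gibbs p B) (PiMat p))
  /\ argmin Parts (fun B => KLdiv p (gibbs p B) (PiMat p))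
    = argmin Parts (fun B => blockEntropy p B)
  /\ extremalPartition n k \in argmin Parts (fun B => blockEntropy p B).
Proof.
move=> p Parts.
have kPartitionP B : B \in Parts -> partition B [set: 'I_n] /\ #|B| = k.
  by rewrite inE => /andP[? /eqP].
split; [|split].
- apply: eq_argmin_le => B1 B2 _ _.
  by rewrite !KLdiv_Qalpha lerD2r ler_pM2l // subr_gt0.
- apply: eq_argmin_le => B1 B2 /kPartitionP[part1 _] /kPartitionP[part2 _].
  by rewrite !KLdiv_gibbs.
- rewrite inE extremalPartition_kPartition //=; apply/forall_inP => B.
  case/kPartitionP=> partB cardB.
  exact: blockEntropy_extremalPartition_le.
Qed.
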